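(* Let $X$, $Z$ be topological vector spaces, $C\subseteq Z$ a nonempty closed convex cone with $C^-\neq\{0\}$, and $f:X\to\mathcal{F}(Z,C)$. If $f$ is Hausdorff upper continuous at $x_0\in X$, then $f$ is lower lattice-semicontinuous at $x_0$.
   Context: $\mathcal{F}(Z,C)=\{A\subseteq Z\colon A=\operatorname{cl}(A+C)\}$ (empty set included); $C^-=\{z^*\in Z^*\colon z^*(z)\le0\ \forall z\in C\}$. $f$ is Hausdorff upper continuous at $x_0$ iff for every neighborhood $V$ of $0$ in $Z$ there is a neighborhood $U$ of $x_0$ with $f(x)\subseteq f(x_0)+V$ for all $x\in U$. $f$ is lower lattice-semicontinuous at $x_0$ iff $f(x_0)\supseteq\bigcap_{U\in\mathcal{N}(x_0)}\operatorname{cl}\bigcup_{x\in U}f(x)$ ($\mathcal{N}(x_0)$ the neighborhoods of $x_0$); equivalently, for every $z_0\notin f(x_0)$ there exist a neighborhood $U$ of $x_0$ and a neighborhood $V$ of $z_0$ with $z\notin f(x)$ for all $x\in U$, $z\in V$. *)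

From HB Require Import structures.
From mathcomp Require Import all_boot all_order all_algebra.
From mathcomp Require Import all_classical all_reals all_analysis.
Set Implicit Arguments. Unset Strict Implicit. Unset Printing Implicit Defensive.
Import Order.TTheory GRing.Theory Num.Theory.
Local Open Scope classical_set_scope.
Local Open Scope ring_scope.

Section Defs.
Variables (R : realType) (Z : topologicalLmodType R).

Definition convex_cone (C : set Z) : Prop :=
  (forall t (c : Z), 0 <= t -> C c -> C (t *: c)) /\
  (forall (x y : Z) (t : R), C x -> C y -> 0 <= t -> t <= 1 ->
      C (t *: x + (1 - t) *: y)).

(* The topological dual cone C^- = {z* in Z^* | z*(z) <= 0 for all z in C},
   Z^* = continuous linear functionals Z -> R. *)
Definition dual_cone (C : set Z) : set (Z -> R) :=
  [set zs | (forall (a : R) (x y : Z), zs (a *: x + y) = a * zs x + zs y) /\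
            continuous (zs : Z -> R^o) /\ (forall z, C z -> zs z <= 0)].

Definition msum (A B : set Z) : set Z := [set a + b | a in A & b in B].

Definition FZC (C : set Z) : set (set Z) :=
  [set A | A = closure (msum A C)].
End Defs.

Section Semicont.
Variables (R : realType) (X : topologicalType) (Z : topologicalLmodType R).

Definition hausdorff_upper_continuous_at (f : X -> set Z) (x0 : X) : Prop :=
  forall V : set Z, nbhs (0 : Z) V ->
    exists U : set X, nbhs x0 U /\ forall x, U x -> f x `<=` msum (f x0) V.

Definition lower_lattice_semicontinuous_at (f : X -> set Z) (x0 : X) : Prop :=
  \bigcap_(U in nbhs x0) closure (\bigcup_(x in U) f x) `<=` f x0.
End Semicont.

From Pilot Require Import Defs.
From HB Require Import structures.
From mathcomp Require Import all_boot all_order all_algebra.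
From mathcomp Require Import all_classical all_reals all_analysis.
Import Order.TTheory GRing.Theory Num.Theory.
Local Open Scope classical_set_scope.
Local Open Scope ring_scope.

(* If z0 is a limit of values of f near x0, then by
   Hausdorff upper continuity it lies in the closure of f x0 + V for every
   neighbourhood V of 0; continuity of subtraction shrinks this to the closure
   of f x0, which is f x0 itself. *)

Section HausdorffUpperLowerLattice.
Variables (R : realType) (Z : topologicalLmodType R).

Lemma closure_msum_nbhs0 (A : set Z) (z0 : Z) :
  (forall V : set Z, nbhs (0 : Z) V -> closure (Defs.msum A V) z0) ->
  closure A z0.
Proof.
move=> hAV W nW.
have : nbhs (z0, 0) ((fun p : Z * Z => p.1 - p.2) @^-1` W).
  by apply: sub_continuous; rewrite /= subr0.
case=> [[N V]] /= [nN nV] NVW.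
have [_ [[a Aa [v Vv <-]] Nav]] := hAV V nV N nN.
exists a; split => //.
by have := NVW (a + v, v) (conj Nav Vv); rewrite /= addrK.
Qed.

Variable X : topologicalType.

Lemma hausdorff_upper_lower_lattice (f : X -> set Z) (x0 : X) :
  closed (f x0) -> hausdorff_upper_continuous_at f x0 ->
  lower_lattice_semicontinuous_at f x0.
Proof.
move=> clf hU z0 hz; rewrite (closure_id (f x0)).1 //.
apply: closure_msum_nbhs0 => V nV.
have [U [nU fU]] := hU V nV.
apply: closureS (hz U nU).
by move=> z [x Ux]; exact: fU x Ux z.
Qed.

End HausdorffUpperLowerLattice.

Theorem mainTheorem10 (R : realType) (X Z : topologicalLmodType R) (C : set Z)
  (f : X -> set Z) (x0 : X) :
  C !=set0 -> closed C -> convex_cone C ->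
  dual_cone C <> [set (fun _ : Z => 0 : R)] ->
  (forall x, FZC C (f x)) ->
  hausdorff_upper_continuous_at f x0 ->
  lower_lattice_semicontinuous_at f x0.
Proof.
move=> _ _ _ _ hF; apply: hausdorff_upper_lower_lattice.
by rewrite (hF x0); exact: closed_closure.
Qed.
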